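(* Let $[L_1],[L_2],[L_3]\in\mathfrak B_3^0$ be distinct, and suppose the lines between $[L_1]$ and $[L_2]$ and between $[L_1]$ and $[L_3]$ are both unbent. Then either the three classes lie in a single apartment, or there exist a basis $e_1,e_2,e_3$ of $L_1$ and integers $t,s,u$ with $0<t<s$ and $t<u$ such that, after possibly exchanging $[L_2]$ and $[L_3]$, the classes $[L_2],[L_3]$ have representatives of one of the following forms: (i) $L_2=R\{e_1,\pi^se_2,\pi^se_3\}$ and $L_3=R\{e_1+\pi^te_2,\pi^ue_2,\pi^ue_3\}$; (ii) $L_2=R\{e_1,\pi^se_2,\pi^se_3\}$ and $L_3=R\{e_1+\pi^te_3,e_2,\pi^ue_3\}$; (iii) $L_2=R\{e_1,e_2,\pi^se_3\}$ and $L_3=R\{e_1+\pi^te_3,e_2,\pi^ue_3\}$. Here $R\{f_1,f_2,f_3\}$ denotes the $R$-span of $f_1,f_2,f_3$.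
   Context: Let $K$ be a field with a discrete valuation $v\colon K^*\to\mathbb Z$, valuation ring $R$, residue field $k$ and uniformizer $\pi$. Let $V$ be a $3$-dimensional $K$-vector space. A lattice is an $R$-submodule of $V$ free of rank $3$; $\mathfrak B_3^0$ is the set of homothety classes $[L]=\{\alpha L:\alpha\in K^*\}$ of lattices. A set of classes lies in a single apartment if there is a basis $f_1,f_2,f_3$ of $V$ such that every class in the set is represented by a lattice $\pi^{m_1}Rf_1+\pi^{m_2}Rf_2+\pi^{m_3}Rf_3$ with $m_i\in\mathbb Z$. For distinct $[L],[M]\in\mathfrak B_3^0$ choose (by the elementary divisor theorem) a basis $e_1,e_2,e_3$ of $V$ and integers $m_1\le m_2\le m_3$ with $L=Re_1+Re_2+Re_3$, $M=\pi^{m_1}Re_1+\pi^{m_2}Re_2+\pi^{m_3}Re_3$; the line between $[L]$ and $[M]$ is bent if $m_1<m_2<m_3$ and unbent otherwise. *)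

From HB Require Import structures.
From mathcomp Require Import all_boot all_order all_algebra.
Set Implicit Arguments. Unset Strict Implicit. Unset Printing Implicit Defensive.
Import Order.TTheory GRing.Theory Num.Theory.
Local Open Scope ring_scope.

(* A discrete valuation v : K^* -> Z (values on 0 are irrelevant junk). *)
Definition discrete_valuation (K : fieldType) (v : K -> int) : Prop :=
  (forall x y : K, x != 0 -> y != 0 -> v (x * y) = v x + v y) /\
  (forall x y : K, x != 0 -> y != 0 -> x + y != 0 ->
      Num.min (v x) (v y) <= v (x + y)) /\
  (exists x : K, x != 0 /\ v x = 1).

Definition inR (K : fieldType) (v : K -> int) (x : K) : Prop :=
  x = 0 \/ 0 <= v x.

Definition vec (K : fieldType) := 'rV[K]_3.

Definition span3 (K : fieldType) (v : K -> int) (f1 f2 f3 : vec K) : vec K -> Prop :=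
  fun x => exists a b c : K, inR v a /\ inR v b /\ inR v c /\
                             x = a *: f1 + b *: f2 + c *: f3.

Definition basis3 (K : fieldType) (f1 f2 f3 : vec K) : Prop :=
  forall a b c : K, a *: f1 + b *: f2 + c *: f3 = 0 -> a = 0 /\ b = 0 /\ c = 0.

Definition same_set (K : fieldType) (L M : vec K -> Prop) : Prop :=
  forall x, L x <-> M x.

(* A lattice: an R-submodule of V free of rank 3, i.e. the R-span of
   R-(equivalently K-)linearly independent f1,f2,f3. *)
Definition is_lattice (K : fieldType) (v : K -> int) (L : vec K -> Prop) : Prop :=
  exists f1 f2 f3 : vec K, basis3 f1 f2 f3 /\ same_set L (span3 v f1 f2 f3).

Definition homothetic (K : fieldType) (L M : vec K -> Prop) : Prop :=
  exists alpha : K, alpha != 0 /\ forall x, L x <-> M (alpha^-1 *: x).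

(* The line between [L] and [M] is unbent: in an elementary divisor
   presentation L = R{e1,e2,e3}, M = R{pi^m1 e1, pi^m2 e2, pi^m3 e3} with
   m1 <= m2 <= m3, one does not have m1 < m2 < m3.  (The m_i are unique
   up to a common shift, so this does not depend on the choice.) *)
Definition unbent (K : fieldType) (v : K -> int) (pi : K) (L M : vec K -> Prop) : Prop :=
  exists (e1 e2 e3 : vec K) (m1 m2 m3 : int),
    basis3 e1 e2 e3 /\ m1 <= m2 /\ m2 <= m3 /\
    same_set L (span3 v e1 e2 e3) /\
    same_set M (span3 v (pi ^ m1 *: e1) (pi ^ m2 *: e2) (pi ^ m3 *: e3)) /\
    ~ (m1 < m2 /\ m2 < m3).

Definition same_apartment (K : fieldType) (v : K -> int) (pi : K)
  (L1 L2 L3 : vec K -> Prop) : Prop :=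
  exists f1 f2 f3 : vec K, basis3 f1 f2 f3 /\
    forall L, (L = L1 \/ L = L2 \/ L = L3) ->
      exists m1 m2 m3 : int,
        homothetic L (span3 v (pi ^ m1 *: f1) (pi ^ m2 *: f2) (pi ^ m3 *: f3)).

Definition special_forms (K : fieldType) (v : K -> int) (pi : K)
  (e1 e2 e3 : vec K) (t s u : int) (M2 M3 : vec K -> Prop) : Prop :=
  (homothetic M2 (span3 v e1 (pi ^ s *: e2) (pi ^ s *: e3)) /\
   homothetic M3 (span3 v (e1 + pi ^ t *: e2) (pi ^ u *: e2) (pi ^ u *: e3)))
  \/
  (homothetic M2 (span3 v e1 (pi ^ s *: e2) (pi ^ s *: e3)) /\
   homothetic M3 (span3 v (e1 + pi ^ t *: e3) e2 (pi ^ u *: e3)))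
  \/
  (homothetic M2 (span3 v e1 e2 (pi ^ s *: e3)) /\
   homothetic M3 (span3 v (e1 + pi ^ t *: e3) e2 (pi ^ u *: e3))).

From HB Require Import structures.
From mathcomp Require Import all_boot all_order all_algebra.
From mathcomp Require Import ring.
Import Order.TTheory GRing.Theory Num.Theory.
Set Implicit Arguments.
Unset Strict Implicit.
Unset Printing Implicit Defensive.
Local Open Scope ring_scope.

Ltac vec_ring := apply/rowP => j; rewrite !mxE; ring.
Ltac vec_field := apply/rowP => j; rewrite !mxE; field.

(* Along an unbent line the elementary divisors take at most
   two values, so after rescaling the far end is R x + pi^s L1 or
   R x + R y + pi^s L1 with s > 0 and x (resp. x, y) part of a basis of L1.  Such
   a lattice only depends on x (resp. on R x + R y) up to units and modulo
   pi^s L1.  Expressing the generators of L3 in a basis adapted to L2, and using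
   that members of a basis are primitive, one finds either a basis of L1 adapted
   to both lattices, or a basis e1, e2, e3 in which the generators become e1 and
   e1 + pi^t e for a third basis vector e.  The term pi^t e is absorbed by
   pi^s L1 or pi^u L1 unless t < s and t < u, which leaves the special forms. *)

(** * The valuation ring *)

Section Valuation.
Variables (K : fieldType) (v : K -> int).
Hypothesis hv : discrete_valuation v.

Lemma valM x y : x != 0 -> y != 0 -> v (x * y) = v x + v y.
Proof. by case: hv => vM _; apply: vM. Qed.

Lemma val1 : v 1 = 0.
Proof.
have := valM (oner_neq0 K) (oner_neq0 K); rewrite mulr1.
by move=> /(congr1 (fun z => z - v 1)); rewrite subrr addrK.
Qed.

Lemma valV x : x != 0 -> v x^-1 = - v x.
Proof.
move=> x0; have := valM x0 (invr_neq0 x0); rewrite mulfV // val1.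
by move=> /esym/eqP; rewrite addrC addr_eq0 => /eqP.
Qed.

Lemma valN x : x != 0 -> v (- x) = v x.
Proof.
have n1 : (-1 : K) != 0 by rewrite oppr_eq0 oner_neq0.
have vN1 : v (-1) = 0.
  have := valM n1 n1; rewrite mulrNN mulr1 val1.
  by move=> /esym/eqP; rewrite -mulr2n mulrn_eq0 => /eqP.
by move=> x0; rewrite -mulN1r valM // vN1 add0r.
Qed.

Local Notation R := (inR v).

Lemma inR0 : R 0. Proof. by left. Qed.

Lemma inR1 : R 1. Proof. by right; rewrite val1. Qed.

Lemma inRM x y : R x -> R y -> R (x * y).
Proof.
case: (eqVneq x 0) => [-> _ _|x0]; first by rewrite mul0r; left.
case: (eqVneq y 0) => [-> _ _|y0]; first by rewrite mulr0; left.
case=> [/eqP|hx]; first by rewrite (negbTE x0).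
case=> [/eqP|hy]; first by rewrite (negbTE y0).
by right; rewrite valM // addr_ge0.
Qed.

Lemma inRD x y : R x -> R y -> R (x + y).
Proof.
case: (eqVneq x 0) => [-> _|x0]; first by rewrite add0r.
case: (eqVneq y 0) => [-> ?|y0]; first by rewrite addr0.
case: (eqVneq (x + y) 0) => [-> _ _|xy0]; first exact: inR0.
case=> [/eqP|hx]; first by rewrite (negbTE x0).
case=> [/eqP|hy]; first by rewrite (negbTE y0).
case: hv => _ [vD _]; right.
by apply: le_trans (vD _ _ x0 y0 xy0); rewrite le_min hx hy.
Qed.

Lemma inRN x : R x -> R (- x).
Proof.
case: (eqVneq x 0) => [-> _|x0]; first by rewrite oppr0; left.
by case=> [/eqP|hx]; [rewrite (negbTE x0)|right; rewrite valN].
Qed.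

Lemma inRB x y : R x -> R y -> R (x - y).
Proof. by move=> hx /inRN; apply: inRD. Qed.

Definition vunit (c : K) := c != 0 /\ v c = 0.

Lemma vunit_inR c : vunit c -> R c.
Proof. by case=> _ h; right; rewrite h. Qed.

Lemma vunit1 : vunit 1.
Proof. by split; [exact: oner_neq0|exact: val1]. Qed.

Lemma vunitV c : vunit c -> vunit c^-1.
Proof. by case=> c0 h; split; [rewrite invr_neq0|rewrite valV // h oppr0]. Qed.

Lemma inRV c : vunit c -> R c^-1.
Proof. by move/vunitV/vunit_inR. Qed.

Lemma vunit_dec c : vunit c \/ ~ vunit c.
Proof.
case: (eqVneq c 0) => [->|c0]; first by right; case; rewrite eqxx.
by case: (eqVneq (v c) 0) => h; [left|right; case=> _ /eqP; rewrite (negbTE h)].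
Qed.

Variable pi : K.
Hypotheses (hpi : v pi = 1) (pi0 : pi != 0).

Lemma val_piX (n : int) : v (pi ^ n) = n.
Proof.
have vn (k : nat) : v (pi ^+ k) = k%:Z.
  elim: k => [|k IH]; first by rewrite expr0 val1.
  by rewrite exprS valM ?expf_neq0 // IH hpi intS.
case: n => k; first exact: vn.
by rewrite /exprz valV ?expf_neq0 // vn NegzE.
Qed.

Lemma inR_piX (n : int) : 0 <= n -> R (pi ^ n).
Proof. by move=> hn; right; rewrite val_piX. Qed.

Lemma piX_split (k t : int) : pi ^ t = pi ^ k * pi ^ (t - k).
Proof. by rewrite -expfzDr // addrC subrK. Qed.

Lemma inR_divr x y : x != 0 -> y = 0 \/ v x <= v y -> R (y / x).
Proof.
case: (eqVneq y 0) => [-> _ _|y0 x0 [/eqP|h]]; first by rewrite mul0r; exact: inR0.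
  by rewrite (negbTE y0).
by right; rewrite valM ?invr_neq0 // valV // subr_ge0.
Qed.

Lemma piX_factor (c : K) (t : int) : c = 0 \/ t <= v c ->
  exists c', R c' /\ c = pi ^ t * c'.
Proof.
move=> h; exists (pi ^ (- t) * c); split; last first.
  by rewrite mulrA -expfzDr // subrr expr0z mul1r.
case: (eqVneq c 0) => [->|c0]; first by rewrite mulr0; left.
case: h => [/eqP|h]; first by rewrite (negbTE c0).
by right; rewrite valM ?expfz_neq0 // val_piX addrC subr_ge0.
Qed.

Lemma unit_part c : c != 0 -> exists g, vunit g /\ c = pi ^ (v c) * g.
Proof.
move=> c0; exists (pi ^ (- v c) * c); split; last first.
  by rewrite mulrA -expfzDr // subrr expr0z mul1r.
by split; [rewrite mulf_neq0 ?expfz_neq0|rewrite valM ?expfz_neq0 // val_piX addNr].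
Qed.

Lemma nonunit_piM c : R c -> ~ vunit c -> exists c', R c' /\ c = pi * c'.
Proof.
move=> hc hn; have [c' [hc' ->]] : exists c', R c' /\ c = pi ^ 1 * c'.
  apply: piX_factor; case: (eqVneq c 0) => [|c0]; first by left.
  case: hc => [/eqP|hc]; first by rewrite (negbTE c0).
  by right; rewrite -gtz0_ge1 lt_def hc andbT; apply/eqP => h; apply: hn.
by exists c'; rewrite expr1z.
Qed.

Lemma piXM_nonunit (t : int) c : 0 < t -> R c -> ~ vunit (pi ^ t * c).
Proof.
move=> ht hc [h0]; have c0 : c != 0 by apply: contraNneq h0 => ->; rewrite mulr0.
case: hc => [/eqP|hc]; first by rewrite (negbTE c0).
by rewrite valM ?expfz_neq0 // val_piX => /eqP; rewrite gt_eqF // ltr_wpDr.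
Qed.

Lemma inR_trichotomy c : R c ->
  [\/ c = 0, vunit c | exists t : int, 0 < t /\ exists g, vunit g /\ c = pi ^ t * g].
Proof.
case: (eqVneq c 0) => [-> _|c0]; first exact: Or31.
case=> [/eqP|hc]; first by rewrite (negbTE c0).
have [g [ug eg]] := unit_part c0.
move: hc; rewrite le_eqVlt => /orP[/eqP/esym vc0|vcpos]; first exact: Or32.
by apply: Or33; exists (v c); split => //; exists g.
Qed.

(* t is the smaller of v c2 and v c3. *)
Lemma common_piX_factor c2 c3 : R c2 -> R c3 -> c2 != 0 \/ c3 != 0 ->
  exists t : int, 0 <= t /\ exists c2' c3', R c2' /\ R c3' /\
    c2 = pi ^ t * c2' /\ c3 = pi ^ t * c3' /\ (vunit c2' \/ vunit c3').
Proof.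
have key a b : R a -> a != 0 -> b = 0 \/ v a <= v b ->
    exists t : int, 0 <= t /\ exists a' b', R a' /\ R b' /\
      a = pi ^ t * a' /\ b = pi ^ t * b' /\ vunit a'.
  move=> ha a0 hab; exists (v a); split.
    by case: ha => [/eqP|//]; rewrite (negbTE a0).
  have [g [gu ga]] := unit_part a0; have [b' [hb' eb]] := piX_factor hab.
  by exists g, b'; split; first exact: vunit_inR.
move=> h2 h3 hn.
have swap t a b : R a /\ R b /\ c3 = pi ^ t * a /\ c2 = pi ^ t * b /\ vunit a ->
    R b /\ R a /\ c2 = pi ^ t * b /\ c3 = pi ^ t * a /\ (vunit b \/ vunit a).
  by move=> [? [? [? [? ?]]]]; do 4 split => //; right.
case: (eqVneq c2 0) => [c20|c20]; case: (eqVneq c3 0) => [c30|c30].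
- by case: hn; rewrite ?c20 ?c30 eqxx.
- have [t [ht [a' [b' hab]]]] := key c3 c2 h3 c30 (or_introl c20).
  by exists t; split => //; exists b', a'; apply: swap.
- have [t [ht [a' [b' [? [? [? [? ?]]]]]]]] := key c2 c3 h2 c20 (or_introl c30).
  by exists t; split => //; exists a', b'; do 4 split => //; left.
- case: (lerP (v c2) (v c3)) => hle.
  + have [t [ht [a' [b' [? [? [? [? ?]]]]]]]] := key c2 c3 h2 c20 (or_intror hle).
    by exists t; split => //; exists a', b'; do 4 split => //; left.
  + have [t [ht [a' [b' hab]]]] := key c3 c2 h3 c30 (or_intror (ltW hle)).
    by exists t; split => //; exists b', a'; apply: swap.
Qed.

(** * Lattices and their bases *)

Local Notation V := (vec K).

Definition rsubmod (S : V -> Prop) :=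
  [/\ S 0, forall x y, S x -> S y -> S (x + y) & forall r x, R r -> S x -> S (r *: x)].

Lemma rsubmod_comb S x y z a b c : rsubmod S -> S x -> S y -> S z -> R a -> R b -> R c ->
  S (a *: x + b *: y + c *: z).
Proof. by move=> [_ hD hZ] hx hy hz ha hb hc; apply: (hD); [apply: (hD)|]; apply: (hZ). Qed.

Lemma same_set_sym (S S' : V -> Prop) : same_set S S' -> same_set S' S.
Proof. by move=> e x; split => /e. Qed.

Lemma same_set_trans (S S' S'' : V -> Prop) :
  same_set S S' -> same_set S' S'' -> same_set S S''.
Proof. by move=> e e' x; split => [/e/e'|/e'/e]. Qed.

Lemma rsubmod_same_set S S' : same_set S S' -> rsubmod S -> rsubmod S'.
Proof.
move=> e [h0 hD hZ]; split; first exact/e.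
  by move=> x y /e hx /e hy; apply/e; apply: hD.
by move=> r x hr /e hx; apply/e; apply: hZ.
Qed.

Lemma span3_intro f1 f2 f3 a b c w : R a -> R b -> R c ->
  w = a *: f1 + b *: f2 + c *: f3 -> span3 v f1 f2 f3 w.
Proof. by move=> ha hb hc ->; exists a, b, c. Qed.

Lemma rsubmod_span3 f1 f2 f3 : rsubmod (span3 v f1 f2 f3).
Proof.
split; first by apply: (span3_intro inR0 inR0 inR0); vec_ring.
  move=> _ _ [a [b [c [ha [hb [hc ->]]]]]] [a' [b' [c' [ha' [hb' [hc' ->]]]]]].
  by apply: (span3_intro (inRD ha ha') (inRD hb hb') (inRD hc hc')); vec_ring.
move=> r _ hr [a [b [c [ha [hb [hc ->]]]]]].
by apply: (span3_intro (inRM hr ha) (inRM hr hb) (inRM hr hc)); vec_ring.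
Qed.

Lemma span3_gens f1 f2 f3 :
  [/\ span3 v f1 f2 f3 f1, span3 v f1 f2 f3 f2 & span3 v f1 f2 f3 f3].
Proof.
by split; [apply: (span3_intro inR1 inR0 inR0)|apply: (span3_intro inR0 inR1 inR0)
  |apply: (span3_intro inR0 inR0 inR1)]; vec_ring.
Qed.

Lemma span3_sub S f1 f2 f3 : rsubmod S -> S f1 -> S f2 -> S f3 ->
  forall w, span3 v f1 f2 f3 w -> S w.
Proof. by move=> hS h1 h2 h3 w [a [b [c [ha [hb [hc ->]]]]]]; apply: rsubmod_comb. Qed.

Lemma same_set_span3 f1 f2 f3 g1 g2 g3 :
  span3 v f1 f2 f3 g1 -> span3 v f1 f2 f3 g2 -> span3 v f1 f2 f3 g3 ->
  span3 v g1 g2 g3 f1 -> span3 v g1 g2 g3 f2 -> span3 v g1 g2 g3 f3 ->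
  same_set (span3 v f1 f2 f3) (span3 v g1 g2 g3).
Proof. by move=> *; split; apply: span3_sub => //; apply: rsubmod_span3. Qed.

Lemma span3_perm12 x y z : same_set (span3 v x y z) (span3 v y x z).
Proof. by case: (span3_gens x y z) (span3_gens y x z) => ? ? ? [? ? ?]; apply: same_set_span3. Qed.

Lemma span3_perm23 x y z : same_set (span3 v x y z) (span3 v x z y).
Proof. by case: (span3_gens x y z) (span3_gens x z y) => ? ? ? [? ? ?]; apply: same_set_span3. Qed.

Definition lattice_basis (L : V -> Prop) f1 f2 f3 :=
  basis3 f1 f2 f3 /\ same_set L (span3 v f1 f2 f3).

Lemma lattice_basis_rsubmod L f1 f2 f3 : lattice_basis L f1 f2 f3 -> rsubmod L.
Proof. by move=> [_ e]; apply: rsubmod_same_set (same_set_sym e) (rsubmod_span3 _ _ _). Qed.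

Lemma lattice_basis_mem L f1 f2 f3 : lattice_basis L f1 f2 f3 -> [/\ L f1, L f2 & L f3].
Proof. by move=> [_ e]; have [? ? ?] := span3_gens f1 f2 f3; split; apply/e. Qed.

Lemma lattice_basis_coord L f1 f2 f3 w : lattice_basis L f1 f2 f3 -> L w ->
  exists a b c, R a /\ R b /\ R c /\ w = a *: f1 + b *: f2 + c *: f3.
Proof. by move=> [_ e] /e. Qed.

Lemma lattice_basis_perm12 L x y z : lattice_basis L x y z -> lattice_basis L y x z.
Proof.
move=> [hb e]; split; last exact: same_set_trans e (span3_perm12 _ _ _).
move=> a b c h; suff [? [? ?]] : b = 0 /\ a = 0 /\ c = 0 by [].
by apply: hb; rewrite -h; vec_ring.
Qed.

Lemma lattice_basis_perm23 L x y z : lattice_basis L x y z -> lattice_basis L x z y.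
Proof.
move=> [hb e]; split; last exact: same_set_trans e (span3_perm23 _ _ _).
move=> a b c h; suff [? [? ?]] : a = 0 /\ c = 0 /\ b = 0 by [].
by apply: hb; rewrite -h; vec_ring.
Qed.

Lemma lattice_basis_exchange1 L f1 f2 f3 c1 c2 c3 :
  lattice_basis L f1 f2 f3 -> R c1 -> R c2 -> R c3 -> vunit c1 ->
  lattice_basis L (c1 *: f1 + c2 *: f2 + c3 *: f3) f2 f3.
Proof.
move=> [hb e] h1 h2 h3 [c10 u1]; split.
  move=> a b c h.
  have [/eqP ha [hb' hc]] : (a * c1) = 0 /\ (a * c2 + b) = 0 /\ (a * c3 + c) = 0.
    by apply: hb; rewrite -h; vec_ring.
  move: ha; rewrite mulf_eq0 (negbTE c10) orbF => /eqP a0.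
  by move: hb' hc; rewrite a0 !mul0r !add0r.
have [g1 g2 g3] := span3_gens f1 f2 f3.
have [_ k2 k3] := span3_gens (c1 *: f1 + c2 *: f2 + c3 *: f3) f2 f3.
apply: same_set_trans e (same_set_span3 _ g2 g3 _ k2 k3).
  by apply: rsubmod_comb => //; apply: rsubmod_span3.
apply: (span3_intro (inRV (conj c10 u1)) (inRN (inRM (inRV (conj c10 u1)) h2))
  (inRN (inRM (inRV (conj c10 u1)) h3))).
by vec_field.
Qed.

Lemma lattice_basis_exchange2 L f1 f2 f3 c1 c2 c3 :
  lattice_basis L f1 f2 f3 -> R c1 -> R c2 -> R c3 -> vunit c2 ->
  lattice_basis L f1 (c1 *: f1 + c2 *: f2 + c3 *: f3) f3.
Proof.
move=> /lattice_basis_perm12 hb h1 h2 h3 u.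
have := lattice_basis_exchange1 hb h2 h1 h3 u.
have -> : c2 *: f2 + c1 *: f1 + c3 *: f3 = c1 *: f1 + c2 *: f2 + c3 *: f3 by vec_ring.
exact: lattice_basis_perm12.
Qed.

Lemma lattice_basis_exchange3 L f1 f2 f3 c1 c2 c3 :
  lattice_basis L f1 f2 f3 -> R c1 -> R c2 -> R c3 -> vunit c3 ->
  lattice_basis L f1 f2 (c1 *: f1 + c2 *: f2 + c3 *: f3).
Proof.
move=> /lattice_basis_perm23 hb h1 h2 h3 u.
have := lattice_basis_exchange2 hb h1 h3 h2 u.
have -> : c1 *: f1 + c3 *: f3 + c2 *: f2 = c1 *: f1 + c2 *: f2 + c3 *: f3 by vec_ring.
exact: lattice_basis_perm23.
Qed.

(* A member of a basis of L is primitive: were all its coordinates in pi R,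
   it would lie in pi L. *)
Lemma lattice_basis_coord_unit L f1 f2 f3 g1 g2 g3 c1 c2 c3 :
  lattice_basis L f1 f2 f3 -> lattice_basis L g1 g2 g3 ->
  R c1 -> R c2 -> R c3 -> g1 = c1 *: f1 + c2 *: f2 + c3 *: f3 ->
  vunit c1 \/ vunit c2 \/ vunit c3.
Proof.
move=> hf [hg eg] h1 h2 h3 e.
case: (vunit_dec c1) => [|n1]; first by left.
case: (vunit_dec c2) => [|n2]; first by right; left.
case: (vunit_dec c3) => [|n3]; first by right; right.
have [d1 [k1 E1]] := nonunit_piM h1 n1.
have [d2 [k2 E2]] := nonunit_piM h2 n2.
have [d3 [k3 E3]] := nonunit_piM h3 n3.
have [m1 m2 m3] := lattice_basis_mem hf.
have /eg [x [y [z [hx [hy [hz ew]]]]]] : L (d1 *: f1 + d2 *: f2 + d3 *: f3).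
  by apply: rsubmod_comb => //; apply: lattice_basis_rsubmod hf.
have [/eqP h _] : 1 - pi * x = 0 /\ - (pi * y) = 0 /\ - (pi * z) = 0.
  have eg1 : g1 = pi *: (x *: g1 + y *: g2 + z *: g3).
    by rewrite -ew e E1 E2 E3; vec_ring.
  apply: hg; transitivity (g1 - pi *: (x *: g1 + y *: g2 + z *: g3)); first by vec_ring.
  by rewrite -eg1 subrr.
have x0 : x != 0 by apply: contra_eqN h => /eqP ->; rewrite mulr0 subr0 oner_eq0.
case: hx => [/eqP|hx]; first by rewrite (negbTE x0).
move: h; rewrite subr_eq0 => /eqP/(congr1 v); rewrite val1 valM // hpi => /eqP.
by rewrite eq_sym gt_eqF // ltr_pwDl.
Qed.

(** * Line and plane lattices *)

Definition line_lattice (L : V -> Prop) x (k : int) (w : V) :=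
  exists r l, R r /\ L l /\ w = r *: x + pi ^ k *: l.

Definition plane_lattice (L : V -> Prop) x y (k : int) (w : V) :=
  exists r r' l, R r /\ R r' /\ L l /\ w = r *: x + r' *: y + pi ^ k *: l.

Lemma line_lattice_intro L x k r l w : R r -> L l -> w = r *: x + pi ^ k *: l ->
  line_lattice L x k w.
Proof. by move=> hr hl ->; exists r, l. Qed.

Lemma plane_lattice_intro L x y k r r' l w : R r -> R r' -> L l ->
  w = r *: x + r' *: y + pi ^ k *: l -> plane_lattice L x y k w.
Proof. by move=> hr hr' hl ->; exists r, r', l. Qed.

Lemma line_lattice_sub L x x' k : rsubmod L -> line_lattice L x' k x ->
  forall w, line_lattice L x k w -> line_lattice L x' k w.
Proof.
move=> [h0 hD hZ] hx _ [r [l [hr [hl ->]]]].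
have [h0' hD' hZ'] : rsubmod (line_lattice L x' k).
  split; first by apply: (line_lattice_intro inR0 h0); vec_ring.
    move=> _ _ [a [m [ha [hm ->]]]] [a' [m' [ha' [hm' ->]]]].
    by apply: (line_lattice_intro (inRD ha ha') (hD _ _ hm hm')); vec_ring.
  move=> c _ hc [a [m [ha [hm ->]]]].
  by apply: (line_lattice_intro (inRM hc ha) (hZ _ _ hc hm)); vec_ring.
by apply: (hD'); [apply: (hZ')|apply: (line_lattice_intro inR0 hl); vec_ring].
Qed.

Lemma plane_lattice_sub L x y x' y' k : rsubmod L ->
  plane_lattice L x' y' k x -> plane_lattice L x' y' k y ->
  forall w, plane_lattice L x y k w -> plane_lattice L x' y' k w.
Proof.
move=> [h0 hD hZ] hx hy _ [r [r' [l [hr [hr' [hl ->]]]]]].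
have [h0' hD' hZ'] : rsubmod (plane_lattice L x' y' k).
  split; first by apply: (plane_lattice_intro inR0 inR0 h0); vec_ring.
    move=> _ _ [a [b [m [ha [hb [hm ->]]]]]] [a' [b' [m' [ha' [hb' [hm' ->]]]]]].
    by apply: (plane_lattice_intro (inRD ha ha') (inRD hb hb') (hD _ _ hm hm')); vec_ring.
  move=> c _ hc [a [b [m [ha [hb [hm ->]]]]]].
  by apply: (plane_lattice_intro (inRM hc ha) (inRM hc hb) (hZ _ _ hc hm)); vec_ring.
apply: (hD'); first by apply: (hD'); apply: (hZ').
by apply: (plane_lattice_intro inR0 inR0 hl); vec_ring.
Qed.

Lemma line_lattice_eq L x x' k : rsubmod L ->
  line_lattice L x' k x -> line_lattice L x k x' ->
  same_set (line_lattice L x k) (line_lattice L x' k).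
Proof. by move=> hL h1 h2 w; split; apply: line_lattice_sub. Qed.

Lemma plane_lattice_eq L x y x' y' k : rsubmod L ->
  plane_lattice L x' y' k x -> plane_lattice L x' y' k y ->
  plane_lattice L x y k x' -> plane_lattice L x y k y' ->
  same_set (plane_lattice L x y k) (plane_lattice L x' y' k).
Proof. by move=> hL h1 h2 h3 h4 w; split; apply: plane_lattice_sub. Qed.

Lemma plane_lattice_sym L x y k : rsubmod L ->
  same_set (plane_lattice L x y k) (plane_lattice L y x k).
Proof.
move=> hL; have [h0 _ _] := hL; apply: plane_lattice_eq => //;
  first [by apply: (plane_lattice_intro inR0 inR1 h0); vec_ring
        |by apply: (plane_lattice_intro inR1 inR0 h0); vec_ring].
Qed.

Lemma line_lattice_scale L x c k : rsubmod L -> vunit c ->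
  same_set (line_lattice L x k) (line_lattice L (c *: x) k).
Proof.
move=> hL [c0 u]; have [h0 _ _] := hL; apply: line_lattice_eq => //.
  by apply: (line_lattice_intro (inRV (conj c0 u)) h0); vec_field.
by apply: (line_lattice_intro (vunit_inR (conj c0 u)) h0); vec_ring.
Qed.

Lemma plane_lattice_exchange L x y k c1 c2 : rsubmod L -> vunit c1 -> R c2 ->
  same_set (plane_lattice L x y k) (plane_lattice L (c1 *: x + c2 *: y) y k).
Proof.
move=> hL [c0 u] h2; have [h0 _ _] := hL; have hV := inRV (conj c0 u).
apply: plane_lattice_eq => //; try by apply: (plane_lattice_intro inR0 inR1 h0); vec_ring.
  by apply: (plane_lattice_intro hV (inRN (inRM hV h2)) h0); vec_field.
by apply: (plane_lattice_intro (vunit_inR (conj c0 u)) h2 h0); vec_ring.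
Qed.

Lemma line_lattice_shift L x y k t : rsubmod L -> L y -> 0 <= k -> k <= t ->
  same_set (line_lattice L x k) (line_lattice L (x + pi ^ t *: y) k).
Proof.
move=> [h0 hD hZ] hy hk hkt; have htk : 0 <= t - k by rewrite subr_ge0.
have hp := inR_piX htk; apply: line_lattice_eq; first by split.
  apply: (line_lattice_intro inR1 (hZ _ _ (inRN hp) hy)).
  by rewrite (piX_split k t); vec_ring.
apply: (line_lattice_intro inR1 (hZ _ _ hp hy)).
by rewrite (piX_split k t); vec_ring.
Qed.

Lemma plane_lattice_shift L x y z k t : rsubmod L -> L z -> 0 <= k -> k <= t ->
  same_set (plane_lattice L x y k) (plane_lattice L (x + pi ^ t *: z) y k).
Proof.
move=> [h0 hD hZ] hz hk hkt; have htk : 0 <= t - k by rewrite subr_ge0.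
have hp := inR_piX htk; apply: plane_lattice_eq; first by split.
- apply: (plane_lattice_intro inR1 inR0 (hZ _ _ (inRN hp) hz)).
  by rewrite (piX_split k t); vec_ring.
- by apply: (plane_lattice_intro inR0 inR1 h0); vec_ring.
- apply: (plane_lattice_intro inR1 inR0 (hZ _ _ hp hz)).
  by rewrite (piX_split k t); vec_ring.
- by apply: (plane_lattice_intro inR0 inR1 h0); vec_ring.
Qed.

Lemma span3_line_lattice L x y z k : lattice_basis L x y z -> 0 <= k ->
  same_set (span3 v x (pi ^ k *: y) (pi ^ k *: z)) (line_lattice L x k).
Proof.
move=> [_ e] hk w; split.
  move=> [a [b [c [ha [hb [hc ->]]]]]].
  apply: (line_lattice_intro (l := b *: y + c *: z) ha); last by vec_ring.
  by apply/e; apply: (span3_intro inR0 hb hc); vec_ring.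
move=> [r [l [hr [/e [a [b [c [ha [hb [hc ->]]]]]] ->]]]].
by apply: (span3_intro (inRD hr (inRM (inR_piX hk) ha)) hb hc); vec_ring.
Qed.

Lemma span3_plane_lattice L x y z k : lattice_basis L x y z -> 0 <= k ->
  same_set (span3 v x y (pi ^ k *: z)) (plane_lattice L x y k).
Proof.
move=> [_ e] hk w; split.
  move=> [a [b [c [ha [hb [hc ->]]]]]].
  apply: (plane_lattice_intro (l := c *: z) ha hb); last by vec_ring.
  by apply/e; apply: (span3_intro inR0 inR0 hc); vec_ring.
move=> [r [r' [l [hr [hr' [/e [a [b [c [ha [hb [hc ->]]]]]] ->]]]]]].
have hp := inR_piX hk.
by apply: (span3_intro (inRD hr (inRM hp ha)) (inRD hr' (inRM hp hb)) hc); vec_ring.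
Qed.

(** * Homotheties and apartments *)

Lemma homothetic_of_same_set (M N : V -> Prop) : same_set M N -> homothetic M N.
Proof. by move=> e; exists 1; split; [exact: oner_neq0|move=> x; rewrite invr1 scale1r]. Qed.

Lemma homothetic_same_set (M N N' : V -> Prop) :
  homothetic M N -> same_set N N' -> homothetic M N'.
Proof. by move=> [a [a0 h]] e; exists a; split => // x; apply: iff_trans (h x) (e _). Qed.

Lemma homothetic_sym (M N : V -> Prop) : homothetic M N -> homothetic N M.
Proof.
move=> [a [a0 h]]; exists a^-1; split; first by rewrite invr_neq0.
move=> y; rewrite invrK; apply: iff_sym; apply: iff_trans (h _) _.
by rewrite scalerA mulVf // scale1r.
Qed.

Lemma homothetic_shift (M : V -> Prop) (m m1 m2 m3 : int) x y z :
  same_set M (span3 v (pi ^ m1 *: x) (pi ^ m2 *: y) (pi ^ m3 *: z)) ->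
  homothetic M (span3 v (pi ^ (m1 - m) *: x) (pi ^ (m2 - m) *: y) (pi ^ (m3 - m) *: z)).
Proof.
have pm0 : pi ^ m != 0 by rewrite expfz_neq0.
move=> e; exists (pi ^ m); split => // w; apply: iff_trans (e w) _; split.
  move=> [a [b [c [ha [hb [hc ->]]]]]]; apply: (span3_intro ha hb hc).
  by rewrite !(piX_split m m1) !(piX_split m m2) !(piX_split m m3); vec_field.
move=> [a [b [c [ha [hb [hc h]]]]]]; apply: (span3_intro ha hb hc).
have -> : w = pi ^ m *: ((pi ^ m)^-1 *: w) by rewrite scalerA mulfV // scale1r.
by rewrite h !(piX_split m m1) !(piX_split m m2) !(piX_split m m3); vec_ring.
Qed.

Definition in_apartment f1 f2 f3 (M : V -> Prop) := exists m1 m2 m3 : int,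
  homothetic M (span3 v (pi ^ m1 *: f1) (pi ^ m2 *: f2) (pi ^ m3 *: f3)).

Lemma same_apartment_intro L1 L2 L3 f1 f2 f3 : lattice_basis L1 f1 f2 f3 ->
  in_apartment f1 f2 f3 L2 -> in_apartment f1 f2 f3 L3 -> same_apartment v pi L1 L2 L3.
Proof.
move=> [hb e] h2 h3; exists f1, f2, f3; split => // L [->|[->|->]] //.
by exists 0, 0, 0; rewrite expr0z !scale1r; apply: homothetic_of_same_set.
Qed.

Lemma in_apartment_perm12 f1 f2 f3 M : in_apartment f2 f1 f3 M -> in_apartment f1 f2 f3 M.
Proof.
move=> [m2 [m1 [m3 h]]]; exists m1, m2, m3.
exact: homothetic_same_set h (span3_perm12 _ _ _).
Qed.

Lemma in_apartment_perm23 f1 f2 f3 M : in_apartment f1 f3 f2 M -> in_apartment f1 f2 f3 M.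
Proof.
move=> [m1 [m3 [m2 h]]]; exists m1, m2, m3.
exact: homothetic_same_set h (span3_perm23 _ _ _).
Qed.

Lemma in_apartment_line L f1 f2 f3 M k : lattice_basis L f1 f2 f3 -> 0 <= k ->
  homothetic M (line_lattice L f1 k) -> in_apartment f1 f2 f3 M.
Proof.
move=> hb hk hM; exists 0, k, k; rewrite expr0z scale1r.
exact: homothetic_same_set hM (same_set_sym (span3_line_lattice hb hk)).
Qed.

Lemma in_apartment_line2 L f1 f2 f3 M k : lattice_basis L f1 f2 f3 -> 0 <= k ->
  homothetic M (line_lattice L f2 k) -> in_apartment f1 f2 f3 M.
Proof.
by move=> /lattice_basis_perm12 hb hk /(in_apartment_line hb hk)/in_apartment_perm12.
Qed.

Lemma in_apartment_line3 L f1 f2 f3 M k : lattice_basis L f1 f2 f3 -> 0 <= k ->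
  homothetic M (line_lattice L f3 k) -> in_apartment f1 f2 f3 M.
Proof.
by move=> /lattice_basis_perm23 hb hk /(in_apartment_line2 hb hk)/in_apartment_perm23.
Qed.

Lemma in_apartment_plane L f1 f2 f3 M k : lattice_basis L f1 f2 f3 -> 0 <= k ->
  homothetic M (plane_lattice L f1 f2 k) -> in_apartment f1 f2 f3 M.
Proof.
move=> hb hk hM; exists 0, 0, k; rewrite expr0z !scale1r.
exact: homothetic_same_set hM (same_set_sym (span3_plane_lattice hb hk)).
Qed.

Lemma in_apartment_plane13 L f1 f2 f3 M k : lattice_basis L f1 f2 f3 -> 0 <= k ->
  homothetic M (plane_lattice L f1 f3 k) -> in_apartment f1 f2 f3 M.
Proof.
by move=> /lattice_basis_perm23 hb hk /(in_apartment_plane hb hk)/in_apartment_perm23.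
Qed.

Lemma in_apartment_plane23 L f1 f2 f3 M k : lattice_basis L f1 f2 f3 -> 0 <= k ->
  homothetic M (plane_lattice L f2 f3 k) -> in_apartment f1 f2 f3 M.
Proof.
by move=> /lattice_basis_perm12 hb hk /(in_apartment_plane13 hb hk)/in_apartment_perm12.
Qed.

Definition apartment_or_special_forms L1 L2 L3 :=
  same_apartment v pi L1 L2 L3 \/
  exists (e1 e2 e3 : vec K) (t s u : int),
    basis3 e1 e2 e3 /\ same_set L1 (span3 v e1 e2 e3) /\
    0 < t /\ t < s /\ t < u /\
    (special_forms v pi e1 e2 e3 t s u L2 L3 \/
     special_forms v pi e1 e2 e3 t s u L3 L2).

Lemma apartment_or_special_formsC L1 L2 L3 :
  apartment_or_special_forms L1 L2 L3 -> apartment_or_special_forms L1 L3 L2.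
Proof.
case=> [[f1 [f2 [f3 [hb h]]]]|[e1 [e2 [e3 [t [s [u [? [? [? [? [? hf]]]]]]]]]]]].
  by left; exists f1, f2, f3; split => // L hL; apply: h; tauto.
by right; exists e1, e2, e3, t, s, u; do 5 split => //; tauto.
Qed.

(** * Relative position of the two lattices *)

Lemma lattice_basis_addpiX2 L f1 f2 f3 (t : int) : lattice_basis L f1 f2 f3 -> 0 <= t ->
  lattice_basis L (f1 + pi ^ t *: f2) f2 f3.
Proof.
move=> hb ht; have -> : f1 + pi ^ t *: f2 = 1 *: f1 + pi ^ t *: f2 + 0 *: f3 by vec_ring.
exact: lattice_basis_exchange1 hb inR1 (inR_piX ht) inR0 vunit1.
Qed.

Lemma lattice_basis_addpiX3 L f1 f2 f3 (t : int) : lattice_basis L f1 f2 f3 -> 0 <= t ->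
  lattice_basis L (f1 + pi ^ t *: f3) f2 f3.
Proof.
move=> hb ht; have -> : f1 + pi ^ t *: f3 = 1 *: f1 + 0 *: f2 + pi ^ t *: f3 by vec_ring.
exact: lattice_basis_exchange1 hb inR1 inR0 (inR_piX ht) vunit1.
Qed.

(* In the normal forms below, when t >= s (resp. t >= u) the term pi^t e is
   absorbed in pi^s L1 (resp. pi^u L1), and both lattices lie in the apartment
   of e1 + pi^t e, e2, e3 (resp. e1, e2, e3). *)
Lemma line_line_normal_form L1 L2 L3 e1 e2 e3 (t s u : int) :
  lattice_basis L1 e1 e2 e3 -> 0 < t -> 0 < s -> 0 < u ->
  homothetic L2 (line_lattice L1 e1 s) ->
  homothetic L3 (line_lattice L1 (e1 + pi ^ t *: e2) u) ->
  apartment_or_special_forms L1 L2 L3.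
Proof.
move=> hb ht hs hu h2 h3; have hb' := lattice_basis_addpiX2 hb (ltW ht).
have hL := lattice_basis_rsubmod hb; have [_ he2 _] := lattice_basis_mem hb.
case: (ltP t s) => hts; last first.
  left; apply: (same_apartment_intro hb'); last exact: in_apartment_line hb' (ltW hu) h3.
  apply: in_apartment_line hb' (ltW hs) _.
  exact: homothetic_same_set h2 (line_lattice_shift _ hL he2 (ltW hs) hts).
case: (ltP t u) => htu; last first.
  left; apply: (same_apartment_intro hb); first exact: in_apartment_line hb (ltW hs) h2.
  apply: in_apartment_line hb (ltW hu) _.
  exact: homothetic_same_set h3 (same_set_sym (line_lattice_shift _ hL he2 (ltW hu) htu)).
right; exists e1, e2, e3, t, s, u; case: (hb) => hb0 hb1; do 5 split => //.
left; left; split.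
  exact: homothetic_same_set h2 (same_set_sym (span3_line_lattice hb (ltW hs))).
exact: homothetic_same_set h3 (same_set_sym (span3_line_lattice hb' (ltW hu))).
Qed.

Lemma line_plane_normal_form L1 L2 L3 e1 e2 e3 (t s u : int) :
  lattice_basis L1 e1 e2 e3 -> 0 < t -> 0 < s -> 0 < u ->
  homothetic L2 (line_lattice L1 e1 s) ->
  homothetic L3 (plane_lattice L1 (e1 + pi ^ t *: e3) e2 u) ->
  apartment_or_special_forms L1 L2 L3.
Proof.
move=> hb ht hs hu h2 h3; have hb' := lattice_basis_addpiX3 hb (ltW ht).
have hL := lattice_basis_rsubmod hb; have [_ _ he3] := lattice_basis_mem hb.
case: (ltP t s) => hts; last first.
  left; apply: (same_apartment_intro hb'); last exact: in_apartment_plane hb' (ltW hu) h3.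
  apply: in_apartment_line hb' (ltW hs) _.
  exact: homothetic_same_set h2 (line_lattice_shift _ hL he3 (ltW hs) hts).
case: (ltP t u) => htu; last first.
  left; apply: (same_apartment_intro hb); first exact: in_apartment_line hb (ltW hs) h2.
  apply: in_apartment_plane hb (ltW hu) _.
  exact: homothetic_same_set h3 (same_set_sym (plane_lattice_shift _ _ hL he3 (ltW hu) htu)).
right; exists e1, e2, e3, t, s, u; case: (hb) => hb0 hb1; do 5 split => //.
left; right; left; split.
  exact: homothetic_same_set h2 (same_set_sym (span3_line_lattice hb (ltW hs))).
exact: homothetic_same_set h3 (same_set_sym (span3_plane_lattice hb' (ltW hu))).
Qed.

Lemma plane_plane_normal_form L1 L2 L3 e1 e2 e3 (t s u : int) :
  lattice_basis L1 e1 e2 e3 -> 0 < t -> 0 < s -> 0 < u ->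
  homothetic L2 (plane_lattice L1 e1 e2 s) ->
  homothetic L3 (plane_lattice L1 (e1 + pi ^ t *: e3) e2 u) ->
  apartment_or_special_forms L1 L2 L3.
Proof.
move=> hb ht hs hu h2 h3; have hb' := lattice_basis_addpiX3 hb (ltW ht).
have hL := lattice_basis_rsubmod hb; have [_ _ he3] := lattice_basis_mem hb.
case: (ltP t s) => hts; last first.
  left; apply: (same_apartment_intro hb'); last exact: in_apartment_plane hb' (ltW hu) h3.
  apply: in_apartment_plane hb' (ltW hs) _.
  exact: homothetic_same_set h2 (plane_lattice_shift _ _ hL he3 (ltW hs) hts).
case: (ltP t u) => htu; last first.
  left; apply: (same_apartment_intro hb); first exact: in_apartment_plane hb (ltW hs) h2.
  apply: in_apartment_plane hb (ltW hu) _.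
  exact: homothetic_same_set h3 (same_set_sym (plane_lattice_shift _ _ hL he3 (ltW hu) htu)).
right; exists e1, e2, e3, t, s, u; case: (hb) => hb0 hb1; do 5 split => //.
left; right; right; split.
  exact: homothetic_same_set h2 (same_set_sym (span3_plane_lattice hb (ltW hs))).
exact: homothetic_same_set h3 (same_set_sym (span3_plane_lattice hb' (ltW hu))).
Qed.

Section TiltedPlane.
Variables (L1 L2 L3 : V -> Prop) (e1 e2 e3 : V) (c : K) (u : int).
Hypotheses (he : lattice_basis L1 e1 e2 e3) (hc : R c) (hu : 0 < u).
Hypothesis h3 : homothetic L3 (plane_lattice L1 (e1 + c *: e3) e2 u).

(* The three cases are c = 0, c a unit, and c = pi^t g with t > 0 and g a unit. *)
Lemma tilted_plane_cases :
  [\/ homothetic L3 (plane_lattice L1 e1 e2 u),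
      lattice_basis L1 e1 e2 (e1 + c *: e3) |
      exists t : int, 0 < t /\ exists e3', lattice_basis L1 e1 e2 e3' /\
        homothetic L3 (plane_lattice L1 (e1 + pi ^ t *: e3') e2 u)].
Proof.
case: (inR_trichotomy hc) => [c0|uc|[t [ht [g [ug eg]]]]].
- by apply: Or31; move: h3; rewrite c0 scale0r addr0.
- apply: Or32; have := lattice_basis_exchange3 he inR1 inR0 hc uc.
  by have -> : 1 *: e1 + 0 *: e2 + c *: e3 = e1 + c *: e3 by vec_ring.
- apply: Or33; exists t; split => //; exists (g *: e3); split.
    have := lattice_basis_exchange3 he inR0 inR0 (vunit_inR ug) ug.
    by have -> : 0 *: e1 + 0 *: e2 + g *: e3 = g *: e3 by vec_ring.
  by have -> : e1 + pi ^ t *: (g *: e3) = e1 + c *: e3 by rewrite eg; vec_ring.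
Qed.

Let hL := lattice_basis_rsubmod he.

Lemma line_tilted_plane s : 0 < s -> homothetic L2 (line_lattice L1 e1 s) ->
  apartment_or_special_forms L1 L2 L3.
Proof.
move=> hs h2; case: tilted_plane_cases => [h3'|hf|[t [ht [e3' [he' h3']]]]].
- left; apply: (same_apartment_intro he); first exact: in_apartment_line he (ltW hs) h2.
  exact: in_apartment_plane he (ltW hu) h3'.
- left; apply: (same_apartment_intro hf); first exact: in_apartment_line hf (ltW hs) h2.
  apply: in_apartment_plane23 hf (ltW hu) _.
  exact: homothetic_same_set h3 (plane_lattice_sym _ _ _ hL).
- exact: line_plane_normal_form he' ht hs hu h2 h3'.
Qed.

Lemma plane_tilted_plane s : 0 < s -> homothetic L2 (plane_lattice L1 e1 e2 s) ->
  apartment_or_special_forms L1 L2 L3.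
Proof.
move=> hs h2; case: tilted_plane_cases => [h3'|hf|[t [ht [e3' [he' h3']]]]].
- left; apply: (same_apartment_intro he); first exact: in_apartment_plane he (ltW hs) h2.
  exact: in_apartment_plane he (ltW hu) h3'.
- left; apply: (same_apartment_intro hf); first exact: in_apartment_plane hf (ltW hs) h2.
  apply: in_apartment_plane23 hf (ltW hu) _.
  exact: homothetic_same_set h3 (plane_lattice_sym _ _ _ hL).
- exact: plane_plane_normal_form he' ht hs hu h2 h3'.
Qed.

End TiltedPlane.

Lemma lattice_basis_exchange23 L a1 a2 a3 c2 c3 : lattice_basis L a1 a2 a3 ->
  R c2 -> R c3 -> vunit c2 \/ vunit c3 ->
  exists e3, lattice_basis L a1 (c2 *: a2 + c3 *: a3) e3.
Proof.
have -> : c2 *: a2 + c3 *: a3 = 0 *: a1 + c2 *: a2 + c3 *: a3 by vec_ring.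
move=> hb h2 h3 [u2|u3]; first by exists a3; apply: lattice_basis_exchange2 hb inR0 h2 h3 u2.
by exists a2; apply/lattice_basis_perm23/(lattice_basis_exchange3 hb inR0 h2 h3 u3).
Qed.

Lemma line_line_case L1 L2 L3 a1 a2 a3 b1 b2 b3 (s u : int) :
  lattice_basis L1 a1 a2 a3 -> lattice_basis L1 b1 b2 b3 -> 0 < s -> 0 < u ->
  homothetic L2 (line_lattice L1 a1 s) -> homothetic L3 (line_lattice L1 b1 u) ->
  apartment_or_special_forms L1 L2 L3.
Proof.
move=> ha hb hs hu h2 h3; have hL := lattice_basis_rsubmod ha.
have [b1L _ _] := lattice_basis_mem hb.
have [c1 [c2 [c3 [k1 [k2 [k3 eb]]]]]] := lattice_basis_coord ha b1L.
have hp := lattice_basis_coord_unit ha hb k1 k2 k3 eb.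
have [[c20 c30]|c23] : (c2 = 0 /\ c3 = 0) \/ (c2 != 0 \/ c3 != 0).
  case: (eqVneq c2 0) => [c20|]; last by right; left.
  by case: (eqVneq c3 0) => [c30|]; [left|right; right].
  have u1 : vunit c1 by case: hp => [//|[[]|[]]]; rewrite ?c20 ?c30 eqxx.
  left; apply: (same_apartment_intro ha); first exact: in_apartment_line ha (ltW hs) h2.
  apply: in_apartment_line ha (ltW hu) _; apply: homothetic_same_set h3 _.
  have -> : b1 = c1 *: a1 by rewrite eb c20 c30; vec_ring.
  exact: same_set_sym (line_lattice_scale _ _ hL u1).
have [t [ht [c2' [c3' [k2' [k3' [e2 [e3 hu']]]]]]]] := common_piX_factor k2 k3 c23.
have [e3' he] := lattice_basis_exchange23 ha k2' k3' hu'.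
set w := c2' *: a2 + c3' *: a3 in he.
have eb' : b1 = c1 *: a1 + pi ^ t *: w by rewrite eb e2 e3 /w; vec_ring.
move: ht; rewrite le_eqVlt => /orP[/eqP t0|tpos].
  have hb' : lattice_basis L1 a1 b1 e3'.
    rewrite eb' -t0 expr0z; have := lattice_basis_exchange2 he k1 inR1 inR0 vunit1.
    by have -> : c1 *: a1 + 1 *: w + 0 *: e3' = c1 *: a1 + 1 *: w by vec_ring.
  left; apply: (same_apartment_intro hb'); first exact: in_apartment_line hb' (ltW hs) h2.
  exact: in_apartment_line2 hb' (ltW hu) h3.
have u1 : vunit c1.
  by case: hp => [//|[]]; [rewrite e2|rewrite e3]; move/(piXM_nonunit tpos).
have [c10 _] := u1; have ui := vunitV u1.
have he' : lattice_basis L1 a1 (c1^-1 *: w) e3'.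
  have := lattice_basis_exchange2 he inR0 (vunit_inR ui) inR0 ui.
  by have -> : 0 *: a1 + c1^-1 *: w + 0 *: e3' = c1^-1 *: w by vec_ring.
apply: (line_line_normal_form he' tpos hs hu h2); apply: homothetic_same_set h3 _.
have -> : b1 = c1 *: (a1 + pi ^ t *: (c1^-1 *: w)) by rewrite eb'; vec_field.
exact: same_set_sym (line_lattice_scale _ _ hL u1).
Qed.

Lemma line_plane_case L1 L2 L3 a1 a2 a3 b1 b2 b3 (s u : int) :
  lattice_basis L1 a1 a2 a3 -> lattice_basis L1 b1 b2 b3 -> 0 < s -> 0 < u ->
  homothetic L2 (line_lattice L1 a1 s) -> homothetic L3 (plane_lattice L1 b1 b2 u) ->
  apartment_or_special_forms L1 L2 L3.
Proof.
move=> ha hb hs hu h2 h3; have hL := lattice_basis_rsubmod ha.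
have [a1L _ _] := lattice_basis_mem ha.
have [c1 [c2 [c3 [k1 [k2 [k3 ea]]]]]] := lattice_basis_coord hb a1L.
have tilt b1' b2' c1' c2' : lattice_basis L1 b1' b2' b3 -> R c1' -> R c2' -> vunit c1' ->
    a1 = c1' *: b1' + c2' *: b2' + c3 *: b3 ->
    homothetic L3 (plane_lattice L1 b1' b2' u) -> apartment_or_special_forms L1 L2 L3.
  move=> hb' k1' k2' u1 ea' h3'.
  have he := lattice_basis_exchange1 hb' k1' k2' k3 u1; rewrite -ea' in he.
  apply: (line_tilted_plane he (inRN k3) hu _ hs h2).
  have -> : a1 + - c3 *: b3 = c1' *: b1' + c2' *: b2' by rewrite ea'; vec_ring.
  exact: homothetic_same_set h3' (plane_lattice_exchange _ _ _ hL u1 k2').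
case: (lattice_basis_coord_unit hb ha k1 k2 k3 ea) => [u1|[u2|u3]].
- exact: tilt hb k1 k2 u1 ea h3.
- apply: tilt (lattice_basis_perm12 hb) k2 k1 u2 _ _; first by rewrite ea; vec_ring.
  exact: homothetic_same_set h3 (plane_lattice_sym _ _ _ hL).
- have hb' := lattice_basis_exchange3 hb k1 k2 k3 u3; rewrite -ea in hb'.
  left; apply: (same_apartment_intro hb'); first exact: in_apartment_line3 hb' (ltW hs) h2.
  exact: in_apartment_plane hb' (ltW hu) h3.
Qed.

Lemma plane_plane_meet L1 L2 L3 a1 a2 a3 b1 b2 b3 c1 c2 c3 d1 d2 (s u : int) :
  lattice_basis L1 a1 a2 a3 -> lattice_basis L1 b1 b2 b3 -> 0 < s -> 0 < u ->
  R c1 -> R c2 -> R c3 -> R d2 -> vunit d1 ->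
  b1 = c1 *: a1 + c2 *: a2 + c3 *: a3 -> b2 = d1 *: a1 + d2 *: a2 ->
  homothetic L2 (plane_lattice L1 a1 a2 s) -> homothetic L3 (plane_lattice L1 b1 b2 u) ->
  apartment_or_special_forms L1 L2 L3.
Proof.
move=> ha hb hs hu k1 k2 k3 l2 ud1 eb1 eb2 h2 h3; have hL := lattice_basis_rsubmod ha.
have [d10 _] := ud1; have id1 := inRV ud1.
have ha' : lattice_basis L1 b2 a2 a3.
  have := lattice_basis_exchange1 ha (vunit_inR ud1) l2 inR0 ud1.
  by have -> : d1 *: a1 + d2 *: a2 + 0 *: a3 = b2 by rewrite eb2; vec_ring.
have h2' : homothetic L2 (plane_lattice L1 a2 b2 s).
  apply: homothetic_same_set h2 _; rewrite eb2.
  exact: same_set_trans (plane_lattice_exchange _ _ _ hL ud1 l2) (plane_lattice_sym _ _ _ hL).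
(* b1 - k b2 has no a1-component. *)
set k := c1 / d1; set g2 := c2 - c1 * d2 / d1.
have kk : R k := inRM k1 id1.
have kg : R g2 := inRB k2 (inRM (inRM k1 l2) id1).
have eb1' : g2 *: a2 + c3 *: a3 = 1 *: b1 + (- k) *: b2 by rewrite /g2 /k eb1 eb2; vec_field.
have h3' : homothetic L3 (plane_lattice L1 (g2 *: a2 + c3 *: a3) b2 u).
  rewrite eb1'; exact: homothetic_same_set h3 (plane_lattice_exchange _ _ _ hL vunit1 (inRN kk)).
have hb' : lattice_basis L1 (g2 *: a2 + c3 *: a3) b2 b3.
  have := lattice_basis_exchange1 hb inR1 (inRN kk) inR0 vunit1.
  by have -> : 1 *: b1 + - k *: b2 + 0 *: b3 = g2 *: a2 + c3 *: a3 by rewrite eb1'; vec_ring.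
have e0 : g2 *: a2 + c3 *: a3 = 0 *: b2 + g2 *: a2 + c3 *: a3 by vec_ring.
case: (lattice_basis_coord_unit ha' hb' inR0 kg k3 e0) => [[/eqP]|[ug2|u3]] //.
  have ui := vunitV ug2; have [g20 _] := ug2.
  apply: (plane_tilted_plane (lattice_basis_perm12 ha') (inRM (vunit_inR ui) k3) hu _ hs h2').
  apply: homothetic_same_set h3' _.
  have -> : a2 + (g2^-1 * c3) *: a3 = g2^-1 *: (g2 *: a2 + c3 *: a3) + 0 *: b2 by vec_field.
  exact: plane_lattice_exchange _ _ _ hL ui inR0.
have hf := lattice_basis_exchange3 ha' inR0 kg k3 u3; rewrite -e0 in hf.
left; apply: (same_apartment_intro hf).
  exact: in_apartment_plane hf (ltW hs) (homothetic_same_set h2' (plane_lattice_sym _ _ _ hL)).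
exact: in_apartment_plane13 hf (ltW hu) (homothetic_same_set h3' (plane_lattice_sym _ _ _ hL)).
Qed.

Lemma plane_plane_common L1 L2 L3 a1 a2 a3 b1 b2 b3 c1 c2 c3 d1 d2 (s u : int) :
  lattice_basis L1 a1 a2 a3 -> lattice_basis L1 b1 b2 b3 -> 0 < s -> 0 < u ->
  R c1 -> R c2 -> R c3 -> R d1 -> R d2 ->
  b1 = c1 *: a1 + c2 *: a2 + c3 *: a3 -> b2 = d1 *: a1 + d2 *: a2 ->
  homothetic L2 (plane_lattice L1 a1 a2 s) -> homothetic L3 (plane_lattice L1 b1 b2 u) ->
  apartment_or_special_forms L1 L2 L3.
Proof.
move=> ha hb hs hu k1 k2 k3 l1 l2 eb1 eb2 h2 h3.
have eb2' : b2 = d1 *: a1 + d2 *: a2 + 0 *: a3 by rewrite eb2; vec_ring.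
case: (lattice_basis_coord_unit ha (lattice_basis_perm12 hb) l1 l2 inR0 eb2')
  => [u1|[u2|[/eqP]]] //; first exact: plane_plane_meet ha hb hs hu k1 k2 k3 l2 u1 eb1 eb2 h2 h3.
apply: (plane_plane_meet (lattice_basis_perm12 ha) hb hs hu k2 k1 k3 l1 u2 _ _ _ h3).
- by rewrite eb1; vec_ring.
- by rewrite eb2; vec_ring.
- exact: homothetic_same_set h2 (plane_lattice_sym _ _ _ (lattice_basis_rsubmod ha)).
Qed.

(* Subtracting a multiple of b1 from b2 moves b2 into the plane of a1, a2. *)
Lemma plane_plane_ordered L1 L2 L3 a1 a2 a3 b1 b2 b3 c1 c2 c3 d1 d2 d3 (s u : int) :
  lattice_basis L1 a1 a2 a3 -> lattice_basis L1 b1 b2 b3 -> 0 < s -> 0 < u ->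
  R c1 -> R c2 -> R c3 -> R d1 -> R d2 -> c3 != 0 -> d3 = 0 \/ v c3 <= v d3 ->
  b1 = c1 *: a1 + c2 *: a2 + c3 *: a3 -> b2 = d1 *: a1 + d2 *: a2 + d3 *: a3 ->
  homothetic L2 (plane_lattice L1 a1 a2 s) -> homothetic L3 (plane_lattice L1 b1 b2 u) ->
  apartment_or_special_forms L1 L2 L3.
Proof.
move=> ha hb hs hu k1 k2 k3 l1 l2 c30 hle eb1 eb2 h2 h3; have hL := lattice_basis_rsubmod ha.
have kr := inR_divr c30 hle; set r := d3 / c3 in kr.
have e' : (d1 - r * c1) *: a1 + (d2 - r * c2) *: a2 = 1 *: b2 + (- r) *: b1.
  by rewrite /r eb1 eb2; vec_field.
have hb' : lattice_basis L1 b1 ((d1 - r * c1) *: a1 + (d2 - r * c2) *: a2) b3.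
  have := lattice_basis_exchange2 hb (inRN kr) inR1 inR0 vunit1; rewrite e'.
  by have -> : - r *: b1 + 1 *: b2 + 0 *: b3 = 1 *: b2 + - r *: b1 by vec_ring.
apply: (plane_plane_common ha hb' hs hu k1 k2 k3 (inRB l1 (inRM kr k1)) (inRB l2 (inRM kr k2))
  eb1 erefl h2).
rewrite e'; apply: homothetic_same_set h3 _.
apply: same_set_trans (plane_lattice_sym _ _ _ hL) _.
exact: same_set_trans (plane_lattice_exchange _ _ _ hL vunit1 (inRN kr)) (plane_lattice_sym _ _ _ hL).
Qed.

Lemma plane_plane_case L1 L2 L3 a1 a2 a3 b1 b2 b3 (s u : int) :
  lattice_basis L1 a1 a2 a3 -> lattice_basis L1 b1 b2 b3 -> 0 < s -> 0 < u ->
  homothetic L2 (plane_lattice L1 a1 a2 s) -> homothetic L3 (plane_lattice L1 b1 b2 u) ->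
  apartment_or_special_forms L1 L2 L3.
Proof.
move=> ha hb hs hu h2 h3; have [b1L b2L _] := lattice_basis_mem hb.
have [c1 [c2 [c3 [k1 [k2 [k3 eb1]]]]]] := lattice_basis_coord ha b1L.
have [d1 [d2 [d3 [l1 [l2 [l3 eb2]]]]]] := lattice_basis_coord ha b2L.
have hb' := lattice_basis_perm12 hb.
have h3' := homothetic_same_set h3 (plane_lattice_sym _ _ _ (lattice_basis_rsubmod ha)).
case: (eqVneq c3 0) => [c30|c30].
  move: eb1; rewrite c30 scale0r addr0 => eb1.
  exact: plane_plane_common ha hb' hs hu l1 l2 l3 k1 k2 eb2 eb1 h2 h3'.
case: (eqVneq d3 0) => [d30|d30].
  exact: plane_plane_ordered ha hb hs hu k1 k2 k3 l1 l2 c30 (or_introl d30) eb1 eb2 h2 h3.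
case: (lerP (v c3) (v d3)) => hle.
  exact: plane_plane_ordered ha hb hs hu k1 k2 k3 l1 l2 c30 (or_intror hle) eb1 eb2 h2 h3.
exact: plane_plane_ordered ha hb' hs hu l1 l2 l3 k1 k2 d30 (or_intror (ltW hle)) eb2 eb1 h2 h3'.
Qed.

Lemma unbent_line_or_plane L1 L2 : unbent v pi L1 L2 -> ~ homothetic L1 L2 ->
  exists a1 a2 a3 (s : int), lattice_basis L1 a1 a2 a3 /\ 0 < s /\
    (homothetic L2 (line_lattice L1 a1 s) \/ homothetic L2 (plane_lattice L1 a1 a2 s)).
Proof.
move=> [e1 [e2 [e3 [m1 [m2 [m3 [hb [h12 [h23 [eL1 [eL2 hbent]]]]]]]]]]] hnh.
have he : lattice_basis L1 e1 e2 e3 by [].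
have := homothetic_shift m1 eL2; rewrite subrr expr0z scale1r => hh.
exists e1, e2, e3; move: h12 h23; rewrite !le_eqVlt => /orP[/eqP m12|lt12] /orP[/eqP m23|lt23].
- case: hnh; apply/homothetic_sym/(homothetic_same_set hh).
  by rewrite -m23 -m12 subrr expr0z !scale1r; apply: same_set_sym.
- exists (m3 - m1); split => //; split; first by rewrite subr_gt0 m12.
  right; apply: homothetic_same_set hh _; rewrite -m12 subrr expr0z scale1r.
  by apply: span3_plane_lattice; rewrite // subr_ge0 m12 ltW.
- exists (m2 - m1); split => //; split; first by rewrite subr_gt0.
  left; apply: homothetic_same_set hh _; rewrite -m23.
  by apply: span3_line_lattice; rewrite // subr_ge0 ltW.
- by case: hbent.
Qed.

(** * Excluding pi = 0 *)

Lemma basis3_row_free (f1 f2 f3 : vec K) : basis3 f1 f2 f3 ->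
  row_free (\matrix_(i < 3) [:: f1; f2; f3]`_i).
Proof.
move=> hb; apply/inj_row_free => w.
rewrite mulmx_sum_row !big_ord_recl big_ord0 !rowK /= addr0 addrA => /hb[w0 [w1 w2]].
apply/rowP; case=> [[|[|[|//]]]] i; rewrite mxE; [move: w0|move: w1|move: w2];
  by congr (w _ _ = _); apply: val_inj.
Qed.

Lemma basis3_notin_addsmx (f1 f2 f3 x y : vec K) : basis3 f1 f2 f3 ->
  ~ [/\ (f1 <= x + y)%MS, (f2 <= x + y)%MS & (f3 <= x + y)%MS].
Proof.
move=> /basis3_row_free/eqP hF [h1 h2 h3].
have sub : (\matrix_(i < 3) [:: f1; f2; f3]`_i <= x + y)%MS.
  by apply/row_subP => i; rewrite rowK; case: i => [[|[|[|//]]]].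
by have := mxrankS sub; rewrite hF addsmxE => /leq_trans/(_ (rank_leq_row _)).
Qed.

Lemma span3_with0_submx p q w : span3 v p q 0 w -> (w <= p + q)%MS.
Proof.
move=> [a [b [c [_ [_ [_ ->]]]]]]; rewrite scaler0 addr0.
by apply: addmx_sub; apply: scalemx_sub; [apply: addsmxSl|apply: addsmxSr].
Qed.

Lemma lattice_neq_span3_with0 (M : V -> Prop) p q :
  is_lattice v M -> ~ same_set M (span3 v p q 0).
Proof.
move=> [f1 [f2 [f3 [hb ef]]]] e; apply: (basis3_notin_addsmx (x := p) (y := q) hb).
have [g1 g2 g3] := span3_gens f1 f2 f3.
by split; apply/span3_with0_submx/e/ef.
Qed.

(* The junk value v 0 could be 1; pi = 0 is excluded because it would make
   L2 either degenerate or equal to L1. *)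
Lemma pi_neq0 L1 L2 : is_lattice v L2 -> unbent v pi L1 L2 -> ~ homothetic L1 L2 ->
  pi != 0.
Proof.
move=> hl [e1 [e2 [e3 [m1 [m2 [m3 [_ [_ [_ [eL1 [eL2 _]]]]]]]]]]] hnh.
apply/negP => /eqP p0; move: eL2; rewrite p0.
have zero (m : int) : m != 0 -> forall w : V, (0 : K) ^ m *: w = 0.
  by move=> m0 w; rewrite (eqP (_ : (0 : K) ^ m == 0)) ?scale0r // expfz_eq0 m0 eqxx.
case: (eqVneq m1 0) => [->|/zero-> e]; last first.
  apply: (lattice_neq_span3_with0 hl); apply: same_set_trans e _.
  exact: same_set_trans (span3_perm12 _ _ _) (span3_perm23 _ _ _).
case: (eqVneq m2 0) => [->|/zero-> e]; last first.
  exact: (lattice_neq_span3_with0 hl) (same_set_trans e (span3_perm23 _ _ _)).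
case: (eqVneq m3 0) => [->|/zero-> e]; last exact: lattice_neq_span3_with0 hl e.
rewrite expr0z !scale1r => e; apply: hnh; apply: homothetic_of_same_set.
exact: same_set_trans eL1 (same_set_sym e).
Qed.

End Valuation.

Theorem mainTheorem18 (K : fieldType) (v : K -> int) (pi : K)
  (hv : discrete_valuation v) (hpi : v pi = 1)
  (L1 L2 L3 : vec K -> Prop)
  (hL1 : is_lattice v L1) (hL2 : is_lattice v L2) (hL3 : is_lattice v L3)
  (h12 : ~ homothetic L1 L2) (h13 : ~ homothetic L1 L3) (h23 : ~ homothetic L2 L3)
  (u12 : unbent v pi L1 L2) (u13 : unbent v pi L1 L3) :
  same_apartment v pi L1 L2 L3 \/
  exists (e1 e2 e3 : vec K) (t s u : int),
    basis3 e1 e2 e3 /\ same_set L1 (span3 v e1 e2 e3) /\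
    0 < t /\ t < s /\ t < u /\
    (special_forms v pi e1 e2 e3 t s u L2 L3 \/
     special_forms v pi e1 e2 e3 t s u L3 L2).
Proof.
have pi0 := pi_neq0 hv hL2 u12 h12.
have [a1 [a2 [a3 [s [ha [hs h2]]]]]] := unbent_line_or_plane hv hpi pi0 u12 h12.
have [b1 [b2 [b3 [u [hb [hu h3]]]]]] := unbent_line_or_plane hv hpi pi0 u13 h13.
case: h2 => h2; case: h3 => h3.
- exact (line_line_case hv hpi pi0 ha hb hs hu h2 h3).
- exact (line_plane_case hv hpi pi0 ha hb hs hu h2 h3).
- exact (apartment_or_special_formsC (line_plane_case hv hpi pi0 hb ha hu hs h3 h2)).
- exact (plane_plane_case hv hpi pi0 ha hb hs hu h2 h3).
Qed.
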